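(* Let $\Phi$ be a MAX NAE-$\{3,5\}$-SAT instance on variables $x_1,\dots,x_n$ with positive weights normalized to total weight $1$, and suppose there are unit vectors $\mathbf v_1,\dots,\mathbf v_n$ such that, writing the literal vector of a literal $b x_i$ as $b\mathbf v_i$: for every $3$-clause $\mathrm{NAE}_3(z_1,z_2,z_3)$ the literal vectors $\mathbf u_1,\mathbf u_2,\mathbf u_3$ satisfy $\mathbf u_i\cdot\mathbf u_j=-\tfrac13$ for all $i\ne j$; and for every $5$-clause $\mathrm{NAE}_5(z_1,\dots,z_5)$ the literal vectors (in a suitable ordering) satisfy $\mathbf u_i\cdot\mathbf u_j=\tfrac13$ for $1\le i<j\le 4$ and $\mathbf u_i\cdot\mathbf u_5=0$ for $1\le i\le 4$. Then $\Phi$ has completeness $1$, i.e., the optimal value of the Basic SDP of $\Phi$ equals $1$.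
   Context: $\mathrm{NAE}_k(y_1,\dots,y_k)$ is $0$ if $y_1=\dots=y_k$ and $1$ otherwise. The Basic SDP for an instance with variables $x_1,\dots,x_n$ and weighted clauses $C$ (weights $w_C$) has unit vectors $\mathbf v_0,\mathbf v_1,\dots,\mathbf v_n\in\mathbb R^{n+1}$ and, for each clause $C$, a probability distribution $p_C$ over assignments $\alpha$ to the variables of $C$, subject to: for each clause $C$ and variables $x_i,x_j$ in $C$, $\mathbf v_i\cdot\mathbf v_j=\sum_\alpha \alpha(x_i)\alpha(x_j)p_C(\alpha)$, and $\mathbf v_i\cdot\mathbf v_0=\sum_\alpha\alpha(x_i)p_C(\alpha)$; the objective is $\sum_C w_C\sum_\alpha p_C(\alpha)C(\alpha)$, where $C(\alpha)\in\{0,1\}$ indicates whether $\alpha$ satisfies $C$. The completeness of an instance is its Basic SDP optimal value. *)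

From HB Require Import structures.
From mathcomp Require Import all_boot all_order all_algebra all_fingroup.
From mathcomp Require Import classical_sets reals.
Set Implicit Arguments. Unset Strict Implicit. Unset Printing Implicit Defensive.
Import Order.TTheory GRing.Theory Num.Theory.
Local Open Scope ring_scope.

(* A literal (b, i): b = true is x_i, b = false is the negation -x_i. *)
Definition lit (n : nat) := (bool * 'I_n)%type.

Inductive clause (n : nat) :=
| NAE3 of 3.-tuple (lit n)
| NAE5 of 5.-tuple (lit n).

Definition lits n (C : clause n) : seq (lit n) :=
  match C with NAE3 t => tval t | NAE5 t => tval t end.

Definition vars n (C : clause n) : {set 'I_n} := [set l.2 | l in lits C].

(* assignments to the variables of C (true = +1, false = -1) *)
Definition assn n (C : clause n) := {ffun {x : 'I_n | x \in vars C} -> bool}.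

Definition pm (R : numDomainType) (b : bool) : R := if b then 1 else -1.

Definition bval n (C : clause n) (a : assn C) (i : 'I_n) : bool :=
  if insub i is Some j then a j else false.

(* +-1 value of variable x_i under a (0 if x_i does not occur in C; unused) *)
Definition aval (R : numDomainType) n (C : clause n) (a : assn C) (i : 'I_n) : R :=
  if insub i is Some j then pm R (a j) else 0.

Definition litb n (C : clause n) (a : assn C) (l : lit n) : bool :=
  bval a l.2 == l.1.

Definition sat n (C : clause n) (a : assn C) : bool :=
  ~~ constant [seq litb a l | l <- lits C].

Definition instance (R : numDomainType) n := seq (R * clause n).

Definition wclause (R : numDomainType) n (Phi : instance R n) (k : 'I_(size Phi)) :=
  tnth (in_tuple Phi) k.

Definition dot (R : numDomainType) d (u w : 'rV[R]_d) : R := \sum_(k < d) u 0 k * w 0 k.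

(* Basic SDP: v : 'I_n.+1 -> R^(n+1), with v ord0 = v_0 and v (lift ord0 i) = v_i *)
Definition vvar (R : numDomainType) n (v : 'I_n.+1 -> 'rV[R]_(n.+1)) (i : 'I_n) :=
  v (lift ord0 i).

Definition sdp_feasible (R : numDomainType) n (Phi : instance R n)
  (v : 'I_n.+1 -> 'rV[R]_(n.+1))
  (p : forall k : 'I_(size Phi), assn (wclause k).2 -> R) : Prop :=
  (forall k : 'I_n.+1, dot (v k) (v k) = 1) /\
  (forall k : 'I_(size Phi),
     let C := (wclause k).2 in
     (forall a : assn C, 0 <= p k a) /\
     (\sum_(a : assn C) p k a = 1) /\
     (forall i j : 'I_n, i \in vars C -> j \in vars C ->
        dot (vvar v i) (vvar v j) = \sum_(a : assn C) aval R a i * aval R a j * p k a) /\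
     (forall i : 'I_n, i \in vars C ->
        dot (vvar v i) (v ord0) = \sum_(a : assn C) aval R a i * p k a)).

Definition sdp_obj (R : numDomainType) n (Phi : instance R n)
  (p : forall k : 'I_(size Phi), assn (wclause k).2 -> R) : R :=
  \sum_(k : 'I_(size Phi)) (wclause k).1 *
     \sum_(a : assn (wclause k).2) p k a * (sat a)%:R.

Definition completeness (R : realType) n (Phi : instance R n) : R :=
  sup [set x : R | exists v p, @sdp_feasible R n Phi v p /\ x = sdp_obj p].

Definition litvec (R : numDomainType) n d (u : 'I_n -> 'rV[R]_d) (l : lit n) :=
  pm R l.1 *: u l.2.

Definition good_vectors (R : numDomainType) n d (u : 'I_n -> 'rV[R]_d) (C : clause n) : Prop :=
  match C with
  | NAE3 t => forall i j : 'I_3, i != j ->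
      dot (litvec u (tnth t i)) (litvec u (tnth t j)) = - (1 / 3)
  | NAE5 t => exists s : {perm 'I_5},
      let w := fun j : 'I_5 => litvec u (tnth t (s j)) in
      (forall i j : 'I_5, (i < j)%N -> (j < 4)%N -> dot (w i) (w j) = 1 / 3) /\
      (forall i : 'I_5, (i < 4)%N -> dot (w i) (w ord_max) = 0)
  end.

From HB Require Import structures.
From mathcomp Require Import all_boot all_order all_algebra all_fingroup.
From mathcomp Require Import classical_sets reals.
From mathcomp Require Import ring lra.
Import Order.TTheory GRing.Theory Num.Theory.
Local Open Scope ring_scope.
Set Implicit Arguments. Unset Strict Implicit.

(* For a clause whose literals occupy positions 0, ..., s-1, fix weights pi_q
   summing to 1 and consider the distribution that picks a position m with
   probability pi_m and a uniform sign c, and gives every literal the value c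
   except the literal at position m, which gets -c.  Each such assignment
   NAE-satisfies the clause, the literal values have mean 0, and two distinct
   literals q, q' have correlation 1 - 2 (pi_q + pi_q').  The weights 1/3 for a
   3-clause, and 1/6, 1/6, 1/6, 1/6, 1/3 for a 5-clause in the ordering of the
   hypothesis, make these correlations exactly the prescribed inner products
   -1/3, 1/3 and 0.  So these local distributions agree with the Gram matrix of
   the given vectors; Householder reflections bring the vectors into R^n, and an
   extra coordinate supplies v_0 orthogonal to all of them.  This gives a
   feasible solution of value 1, which is also an upper bound. *)

Section DotProduct.
Variable R : numDomainType.

Lemma dotC d (x y : 'rV[R]_d) : dot x y = dot y x.
Proof. by apply: eq_bigr => k _; rewrite mulrC. Qed.

Lemma dotDl d (x y z : 'rV[R]_d) : dot (x + y) z = dot x z + dot y z.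
Proof. by rewrite /dot -big_split; apply: eq_bigr => k _; rewrite mxE mulrDl. Qed.

Lemma dotZl d a (x z : 'rV[R]_d) : dot (a *: x) z = a * dot x z.
Proof. by rewrite /dot mulr_sumr; apply: eq_bigr => k _; rewrite mxE mulrA. Qed.

Lemma dotBl d (x y z : 'rV[R]_d) : dot (x - y) z = dot x z - dot y z.
Proof. by rewrite -scaleN1r dotDl dotZl mulN1r. Qed.

Lemma dotZr d a (x z : 'rV[R]_d) : dot z (a *: x) = a * dot z x.
Proof. by rewrite dotC dotZl dotC. Qed.

Lemma dotBr d (x y z : 'rV[R]_d) : dot z (x - y) = dot z x - dot z y.
Proof. by rewrite dotC dotBl ![dot _ z]dotC. Qed.

Lemma dot0r d (x : 'rV[R]_d) : dot x 0 = 0.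
Proof. by rewrite -(scale0r 0) dotZr mul0r. Qed.

Lemma dot_delta d (x : 'rV[R]_d) (k : 'I_d) : dot x (delta_mx 0 k) = x 0 k.
Proof.
rewrite /dot (bigD1 k) //= big1 ?addr0 => [|j /negbTE jk]; rewrite mxE ?jk ?eqxx ?mulr0 //.
by rewrite mulr1.
Qed.

Definition row_cons d (a : R) (x : 'rV[R]_d) : 'rV[R]_d.+1 :=
  \row_k (if unlift ord0 k is Some k' then x 0 k' else a).

Definition row_behead d (x : 'rV[R]_d.+1) : 'rV[R]_d := \row_k x 0 (lift ord0 k).

Lemma dot_row_cons d a b (x y : 'rV[R]_d) :
  dot (row_cons a x) (row_cons b y) = a * b + dot x y.
Proof.
rewrite /dot big_ord_recl !mxE unlift_none; congr (_ + _).
by apply: eq_bigr => k _; rewrite !mxE liftK.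
Qed.

Lemma dot_row_behead d (x y : 'rV[R]_d.+1) :
  dot x y = x 0 ord0 * y 0 ord0 + dot (row_behead x) (row_behead y).
Proof. by rewrite /dot big_ord_recl; congr (_ + _); apply: eq_bigr => k _; rewrite !mxE. Qed.

End DotProduct.

Section DotNorm.
Variable R : realDomainType.

Lemma dot_ge0 d (x : 'rV[R]_d) : 0 <= dot x x.
Proof. by apply: sumr_ge0 => k _; rewrite -expr2 sqr_ge0. Qed.

Lemma dot_eq0 d (x : 'rV[R]_d) : (dot x x == 0) = (x == 0).
Proof.
apply/idP/eqP => [|->]; last by rewrite dot0r.
rewrite psumr_eq0 => [/allP x0|k _]; last by rewrite -expr2 sqr_ge0.
apply/rowP => k; have /implyP/(_ isT) := x0 k (mem_index_enum k).
by rewrite mxE mulf_eq0 orbb => /eqP.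
Qed.

End DotNorm.

Section Householder.
Variable R : rcfType.

Definition householder d (w x : 'rV[R]_d) := x - (2 * dot x w / dot w w) *: w.

Lemma dot_householder d (w x y : 'rV[R]_d) :
  dot (householder w x) (householder w y) = dot x y.
Proof.
have [->|w0] := eqVneq w 0; first by rewrite /householder !scaler0 !subr0.
rewrite -dot_eq0 in w0; rewrite !dotBl !dotBr !dotZl !dotZr (dotC w y).
by field.
Qed.

(* The reflection exchanging [e] with a positive multiple of the first basis vector. *)
Lemma householder_axis d (e : 'rV[R]_d.+1) : e != 0 ->
  exists H : 'rV[R]_d.+1 -> 'rV[R]_d.+1,
    (forall x y, dot (H x) (H y) = dot x y) /\
    (forall x, dot x e = 0 -> H x 0 ord0 = 0).
Proof.
rewrite -dot_eq0 => e0; have ee : 0 < dot e e by rewrite lt_def e0 dot_ge0.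
pose r := Num.sqrt (dot e e); have r_gt0 : 0 < r by rewrite sqrtr_gt0.
have rr : r * r = dot e e by rewrite -expr2 sqr_sqrtr ?ltW.
pose w := e - r *: delta_mx 0 ord0.
exists (householder w); split=> [|x xe]; first exact: dot_householder.
have xw : dot x w = - (r * x 0 ord0) by rewrite dotBr dotZr dot_delta xe sub0r.
have ww : dot w w = 2 * r * (r - e 0 ord0).
  by rewrite !dotBl !dotBr !dotZl !dotZr (dotC _ e) !dot_delta mxE !eqxx /= -rr; ring.
rewrite /householder; have [w0|wn0] := eqVneq w 0.
  move/eqP: xw; rewrite w0 dot0r scaler0 subr0 eq_sym oppr_eq0 mulf_eq0.
  by rewrite gt_eqF //= => /eqP.
have : dot w w != 0 by rewrite dot_eq0.
rewrite ww !mulf_eq0 negb_or => /andP[_ {}wn0].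
by rewrite !mxE xw !eqxx mulr1; field; rewrite wn0 gt_eqF.
Qed.

End Householder.

Section GramRepresentation.
Variable R : rcfType.

Lemma exists_orthogonal m d (u : 'I_m -> 'rV[R]_d.+1) : (m <= d)%N ->
  exists2 e : 'rV[R]_d.+1, e != 0 & forall i, dot (u i) e = 0.
Proof.
move=> le_md; pose A : 'M[R]_(d.+1, m) := \matrix_(k, i) u i 0 k.
have /rowV0Pn[e /sub_kermxP eA e0] : kermx A != 0.
  rewrite -mxrank_eq0 mxrank_ker subn_eq0 -ltnNge.
  by apply: leq_ltn_trans (rank_leq_col A) _; rewrite ltnS.
exists e => // i; have /matrixP/(_ 0 i) := eA; rewrite !mxE => <-.
by rewrite dotC; apply: eq_bigr => k _; rewrite mxE.
Qed.

Lemma gram_drop_dim m d (u : 'I_m -> 'rV[R]_d.+1) : (m <= d)%N ->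
  exists u' : 'I_m -> 'rV[R]_d, forall i j, dot (u' i) (u' j) = dot (u i) (u j).
Proof.
move=> /(exists_orthogonal u)[e /householder_axis[H [H_iso H_axis]] ue].
exists (fun i => row_behead (H (u i))) => i j.
by rewrite -H_iso (dot_row_behead (H (u i))) !H_axis // mul0r add0r.
Qed.

Lemma gram_pad_dim m d (u : 'I_m -> 'rV[R]_d) : (d <= m)%N ->
  exists w : 'I_m -> 'rV[R]_m, forall i j, dot (w i) (w j) = dot (u i) (u j).
Proof.
move=> /subnKC; move: (m - d)%N => k; elim: k d u => [|k IHk] d u.
  by rewrite addn0 => dm; subst m; exists u.
rewrite -addSnnS => /(IHk _ (fun i => row_cons 0 (u i)))[w wu].
by exists w => i j; rewrite wu dot_row_cons mul0r add0r.
Qed.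

Lemma gram_square m d (u : 'I_m -> 'rV[R]_d) :
  exists w : 'I_m -> 'rV[R]_m, forall i j, dot (w i) (w j) = dot (u i) (u j).
Proof.
elim: d u => [|d IHd] u; first exact: gram_pad_dim.
have [le_dm|lt_md] := leqP d.+1 m; first exact: gram_pad_dim.
have [u' u'u] := gram_drop_dim u lt_md; have [w wu'] := IHd u'.
by exists w => i j; rewrite wu' u'u.
Qed.

End GramRepresentation.

Section Signs.
Variable R : numDomainType.

Lemma pm_eqb (b c : bool) : pm R (b == c) = pm R b * pm R c.
Proof. by case: b; case: c; rewrite /pm /= ?mulrNN ?mulr1 ?mul1r. Qed.

Lemma pm_sqr (b : bool) : pm R b * pm R b = 1.
Proof. by case: b; rewrite /pm ?mulrNN mulr1. Qed.

Lemma pm_neq (q m : nat) : pm R (q != m) = 1 - 2 * (q == m)%:R.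
Proof. by rewrite /pm; case: (q == m) => /=; rewrite ?subr0 //; ring. Qed.

End Signs.

Section FlipDistribution.
Variables (R : realFieldType) (n : nat) (C : clause n).
Local Notation s := (size (lits C)).

Definition var_pos (i : 'I_n) : nat := index i (map snd (lits C)).

Definition var_sign (i : 'I_n) : bool := (nth (true, i) (lits C) (var_pos i)).1.

(* All literals of [C] take the value [c], except the one at position [m]. *)
Definition flip_assn (m : nat) (c : bool) : assn C :=
  [ffun x => var_sign (val x) == ((var_pos (val x) != m) == c)].

Lemma mem_vars i : (i \in vars C) = (i \in map snd (lits C)).
Proof. by apply/imsetP/mapP => -[l l_C ->]; exists l. Qed.

Lemma var_pos_lt i : i \in vars C -> (var_pos i < s)%N.
Proof. by rewrite mem_vars -index_mem size_map. Qed.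

Lemma nth_var_pos l0 i : i \in vars C -> nth l0 (lits C) (var_pos i) = (var_sign i, i).
Proof.
move=> iC; have iL : i \in map snd (lits C) by rewrite -mem_vars.
rewrite (set_nth_default (true, i)) ?var_pos_lt //.
have := nth_index i iL; rewrite (nth_map (true, i)) ?var_pos_lt // /var_sign.
by case: (nth _ _ _) => b j /= ->.
Qed.

Lemma aval_flip_assn m c i : i \in vars C ->
  aval R (flip_assn m c) i = pm R (var_sign i) * pm R (var_pos i != m) * pm R c.
Proof.
move=> iC; rewrite /aval; case: insubP => [j _ ji|]; last by rewrite iC.
by rewrite ffunE ji !pm_eqb mulrA.
Qed.

Lemma litb_flip_assn m c l0 q : uniq (map snd (lits C)) -> (q < s)%N ->
  litb (flip_assn m c) (nth l0 (lits C) q) = ((q != m) == c).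
Proof.
move=> uniq_C lt_qs; set i := (nth l0 (lits C) q).2.
have iC : i \in vars C by rewrite mem_vars map_f ?mem_nth.
have pos_i : var_pos i = q by rewrite /var_pos /i -(nth_map _ l0.2) ?index_uniq ?size_map.
rewrite -pos_i nth_var_pos // /litb /bval /=; case: insubP => [j _ ji|]; last by rewrite iC.
by rewrite ffunE ji pos_i; case: (var_sign i); case: ((q != m) == c).
Qed.

Lemma sat_flip_assn m c : uniq (map snd (lits C)) -> (2 <= s)%N -> (m < s)%N ->
  sat (flip_assn m c).
Proof.
move=> uniq_C ge2_s lt_ms; apply/negP => /(constantP true)[b litsb].
have [l0 _] : exists l0 : lit n, True by case: (lits C) ge2_s => [|l] // _; exists l.
have val_at q : (q < s)%N -> ((q != m) == c) = b.
  move=> lt_qs; rewrite -(litb_flip_assn m c l0 uniq_C lt_qs) -(nth_map _ true) //.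
  by rewrite litsb nth_nseq size_map lt_qs.
have [m' lt_m's m'm] : exists2 m', (m' < s)%N & m' != m.
  by case: (m) => [|k]; [exists 1%N | exists 0%N; first exact: ltnW].
by move: (val_at _ lt_ms) (val_at _ lt_m's); rewrite eqxx m'm; case: (c); case: (b).
Qed.

Definition flip_dist (pi : nat -> R) (a : assn C) : R :=
  \sum_(m < s) \sum_(c : bool) pi m / 2 * (a == flip_assn m c)%:R.

Lemma sum_flip_dist pi (F : assn C -> R) :
  \sum_(a : assn C) F a * flip_dist pi a =
  \sum_(m < s) \sum_(c : bool) pi m / 2 * F (flip_assn m c).
Proof.
under eq_bigr do rewrite mulr_sumr; rewrite exchange_big; apply: eq_bigr => m _.
under eq_bigr do rewrite mulr_sumr; rewrite exchange_big; apply: eq_bigr => c _.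
rewrite (bigD1 (flip_assn m c)) //= eqxx big1 => [|a /negbTE ->]; last by rewrite !mulr0.
by rewrite addr0 mulr1 mulrC.
Qed.

Variable pi : nat -> R.
Hypothesis pi_ge0 : forall q, (q < s)%N -> 0 <= pi q.
Hypothesis pi_sum1 : \sum_(q < s) pi q = 1.

Lemma flip_dist_ge0 a : 0 <= flip_dist pi a.
Proof.
apply: sumr_ge0 => m _; apply: sumr_ge0 => c _.
by rewrite mulr_ge0 ?divr_ge0 ?ler0n ?pi_ge0.
Qed.

Lemma flip_dist_sum1 : \sum_(a : assn C) flip_dist pi a = 1.
Proof.
under eq_bigr do rewrite -[flip_dist _ _]mul1r.
rewrite (sum_flip_dist pi (fun=> 1)) -[RHS]pi_sum1; apply: eq_bigr => m _.
by rewrite big_bool /=; field.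
Qed.

Lemma flip_dist_mean i : i \in vars C ->
  \sum_(a : assn C) aval R a i * flip_dist pi a = 0.
Proof.
move=> iC; rewrite sum_flip_dist big1 // => m _.
by rewrite big_bool !aval_flip_assn // /pm /=; ring.
Qed.

Lemma flip_dist_corr i j : i \in vars C -> j \in vars C ->
  \sum_(a : assn C) aval R a i * aval R a j * flip_dist pi a =
  pm R (var_sign i) * pm R (var_sign j) *
    \sum_(m < s) pi m * (pm R (var_pos i != m) * pm R (var_pos j != m)).
Proof.
move=> iC jC; rewrite sum_flip_dist mulr_sumr; apply: eq_bigr => m _.
by rewrite big_bool !aval_flip_assn // /pm /=; field.
Qed.

Lemma flip_dist_sat : uniq (map snd (lits C)) -> (2 <= s)%N ->
  \sum_(a : assn C) flip_dist pi a * (sat a)%:R = 1.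
Proof.
move=> uniq_C ge2_s; under eq_bigr do rewrite mulrC.
rewrite (sum_flip_dist pi (fun a => (sat a)%:R)) -[RHS]pi_sum1; apply: eq_bigr => m _.
by rewrite big_bool !sat_flip_assn //=; field.
Qed.

Lemma sum_pm_neq q q' : (q < s)%N -> (q' < s)%N -> q != q' ->
  \sum_(m < s) pi m * (pm R (q != m) * pm R (q' != m)) = 1 - 2 * (pi q + pi q').
Proof.
move=> lt_qs lt_q's qq'.
have pick k : (k < s)%N -> \sum_(m < s) pi m * (k == m)%:R = pi k.
  move=> lt_ks; rewrite (bigD1 (Ordinal lt_ks)) //= eqxx mulr1 big1 ?addr0 // => m.
  by rewrite -val_eqE eq_sym => /negbTE /= ->; rewrite mulr0.
transitivity (\sum_(m < s) (pi m - 2 * (pi m * (q == m)%:R) - 2 * (pi m * (q' == m)%:R))).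
  apply: eq_bigr => m _; rewrite !pm_neq.
  by have [<-|_] := eqVneq q m; rewrite ?[q' == q]eq_sym ?(negbTE qq') /=; ring.
by rewrite !sumrB -!mulr_sumr !pick ?pi_sum1 //; ring.
Qed.

End FlipDistribution.

Section ClauseVectors.
Variables (R : realFieldType) (n d : nat) (u : 'I_n -> 'rV[R]_d).
Hypothesis u_unit : forall i, dot (u i) (u i) = 1.

Definition lit_corr (C : clause n) (pi : nat -> R) : Prop :=
  forall l0 q q', (q < size (lits C))%N -> (q' < size (lits C))%N -> q != q' ->
    dot (litvec u (nth l0 (lits C) q)) (litvec u (nth l0 (lits C) q')) =
    1 - 2 * (pi q + pi q').

Definition flip_weights (C : clause n) (pi : nat -> R) : Prop :=
  [/\ forall q, (q < size (lits C))%N -> 0 < pi q < 1 / 2,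
      \sum_(q < size (lits C)) pi q = 1 & lit_corr C pi].

Lemma lit_corr_tuple k (t : k.-tuple (lit n)) C (pi : nat -> R) : lits C = t ->
  (forall a b : 'I_k, a != b ->
     dot (litvec u (tnth t a)) (litvec u (tnth t b)) = 1 - 2 * (pi a + pi b)) ->
  lit_corr C pi.
Proof.
move=> Ct corr l0 q q'; rewrite Ct size_tuple => lt_qk lt_q'k qq'.
by have := corr (Ordinal lt_qk) (Ordinal lt_q'k) qq'; rewrite !(tnth_nth l0).
Qed.

(* Two literals on one variable would have correlation [+1] or [-1]. *)
Lemma flip_weights_uniq C pi : flip_weights C pi -> uniq (map snd (lits C)).
Proof.
move=> [pi_bd _ corr]; case E: (lits C) => [//|l0 L]; rewrite -{}E.
apply/(uniqP l0.2) => q q'.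
rewrite !inE size_map => lt_qs lt_q's; rewrite !(nth_map l0) // => same_var.
apply/eqP/negPn/negP => qq'; move: (corr l0 q q' lt_qs lt_q's qq').
rewrite /litvec dotZl dotZr {}same_var u_unit mulr1.
have /andP[? ?] := pi_bd q lt_qs; have /andP[? ?] := pi_bd q' lt_q's.
by case: (nth l0 _ q).1; case: (nth l0 _ q').1; rewrite /pm => ?; lra.
Qed.

Lemma dot_flip_dist C pi i j : flip_weights C pi -> i \in vars C -> j \in vars C ->
  dot (u i) (u j) = \sum_(a : assn C) aval R a i * aval R a j * flip_dist pi a.
Proof.
move=> [_ pi_sum1 corr] iC jC; rewrite flip_dist_corr //.
have [<-|ij] := eqVneq i j.
  under eq_bigr do rewrite pm_sqr mulr1.
  by rewrite pm_sqr mul1r pi_sum1 u_unit.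
have pos_ij : var_pos C i != var_pos C j.
  apply: contraNneq ij => pos_ij.
  by have := nth_var_pos (true, i) iC; rewrite pos_ij nth_var_pos // => -[_ ->].
rewrite sum_pm_neq ?var_pos_lt // -(corr (true, i)) ?var_pos_lt //.
rewrite !nth_var_pos // /litvec /= dotZl dotZr !mulrA.
by rewrite -(mulrA (pm R _ * pm R _)) mulrACA !pm_sqr !mul1r.
Qed.

Lemma flip_weights_NAE3 (t : 3.-tuple (lit n)) :
  good_vectors u (NAE3 t) -> flip_weights (NAE3 t) (fun=> 1 / 3).
Proof.
move=> corr; split=> [q _|/=|]; first lra.
  by rewrite size_tuple sumr_const card_ord -mulr_natr; field.
apply: (lit_corr_tuple (t := t)) => // a b ab; rewrite corr //; lra.
Qed.

Definition nae5_weight (s : {perm 'I_5}) (q : nat) : R :=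
  if q == s ord_max then 1 / 3 else 1 / 6.

Lemma flip_weights_NAE5 (t : 5.-tuple (lit n)) :
  good_vectors u (NAE5 t) -> exists pi, flip_weights (NAE5 t) pi.
Proof.
case=> s [corr_lt4 corr_max]; exists (nae5_weight s).
have weight_s a : nae5_weight s (s a) = if a == ord_max then 1 / 3 else 1 / 6.
  by rewrite /nae5_weight val_eqE (inj_eq perm_inj).
have corr_lt (a b : 'I_5) : (a < b)%N ->
    dot (litvec u (tnth t (s a))) (litvec u (tnth t (s b))) =
    1 - 2 * (nae5_weight s (s a) + nae5_weight s (s b)).
  move=> ab; have a4 : (a < 4)%N by rewrite (leq_trans ab) // -ltnS.
  have an : a != ord_max by rewrite -val_eqE neq_ltn a4.
  rewrite !weight_s (negbTE an); have [b4|] := ltnP b 4.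
    have bn : b != ord_max by rewrite -val_eqE neq_ltn b4.
    by rewrite (negbTE bn) corr_lt4 //; lra.
  rewrite leq_eqVlt ltnNge -ltnS ltn_ord orbF => /eqP b4.
  have -> : b = ord_max by apply: val_inj.
  by rewrite eqxx corr_max //; lra.
split=> [q _|/=|].
- by rewrite /nae5_weight; case: ifP => _; lra.
- rewrite size_tuple (reindex_inj (@perm_inj _ s)) /=.
  under eq_bigr do rewrite weight_s.
  by rewrite !big_ord_recr big_ord0 /=; lra.
apply: (lit_corr_tuple (t := t)) => // a b.
rewrite -(permKV s a) -(permKV s b) (inj_eq perm_inj) neq_ltn.
by case/orP=> /corr_lt // corr_ba; rewrite dotC [nae5_weight _ _ + _]addrC.
Qed.

Lemma good_vectors_flip_weights C : good_vectors u C -> exists pi, flip_weights C pi.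
Proof.
case: C => t good; first by exists (fun=> 1 / 3); apply: flip_weights_NAE3.
exact: flip_weights_NAE5.
Qed.

End ClauseVectors.

Lemma size_lits_ge2 n (C : clause n) : (2 <= size (lits C))%N.
Proof. by case: C => t; rewrite /= size_tuple. Qed.

Lemma sdp_obj_le1 (R : realFieldType) n (Phi : instance R n)
    (v : 'I_n.+1 -> 'rV[R]_n.+1) (p : forall k : 'I_(size Phi), assn (wclause k).2 -> R) :
  (forall k : 'I_(size Phi), 0 <= (wclause k).1) -> \sum_(k < size Phi) (wclause k).1 = 1 ->
  sdp_feasible v p -> sdp_obj p <= 1.
Proof.
move=> w_ge0 w_sum1 [_ feas]; rewrite /sdp_obj -[leRHS]w_sum1; apply: ler_sum => k _.
have [p_ge0 [p_sum1 _]] := feas k; rewrite -[leRHS]mulr1 ler_wpM2l // -[leRHS]p_sum1.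
by apply: ler_sum => a _; case: (sat a); rewrite ?mulr1 // mulr0 p_ge0.
Qed.

Lemma exists_sdp_value1 (R : rcfType) n (Phi : instance R n) d (u : 'I_n -> 'rV[R]_d) :
  (forall i, dot (u i) (u i) = 1) -> (forall k : 'I_(size Phi), good_vectors u (wclause k).2) ->
  \sum_(k < size Phi) (wclause k).1 = 1 ->
  exists v p, @sdp_feasible R n Phi v p /\ sdp_obj p = 1.
Proof.
move=> u_unit u_good w_sum1; have [w wu] := gram_square u.
have [pi w_pi] := boolp.choice (fun k => good_vectors_flip_weights (u_good k)).
pose v k := if unlift ord0 k is Some i then row_cons 0 (w i) else row_cons 1 0.
have v_lift i : vvar v i = row_cons 0 (w i) by rewrite /vvar /v liftK.
exists v, (fun k => flip_dist (pi k)); split; last first.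
  rewrite /sdp_obj -[RHS]w_sum1; apply: eq_bigr => k _.
  have [_ pi_sum1 _] := w_pi k.
  by rewrite flip_dist_sat ?mulr1 ?size_lits_ge2 // (flip_weights_uniq u_unit (w_pi k)).
split=> [k|k C].
  case: (unliftP ord0 k) => [i ->|->]; first by rewrite /v liftK dot_row_cons mul0r add0r wu.
  by rewrite /v unlift_none dot_row_cons dot0r mulr1 addr0.
have [pi_bd pi_sum1 _] := w_pi k.
have pi_ge0 q : (q < size (lits C))%N -> 0 <= pi k q by move/pi_bd/andP => [/ltW].
split; first exact: flip_dist_ge0.
split; first exact: flip_dist_sum1.
split=> [i j iC jC|i iC].
  by rewrite !v_lift dot_row_cons mul0r add0r wu; exact: (dot_flip_dist u_unit (w_pi k)).
by rewrite v_lift /v unlift_none dot_row_cons mul0r add0r dot0r flip_dist_mean.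
Qed.

Lemma sup_eq_ub_mem (R : realType) (E : set R) x : E x -> ubound E x -> sup E = x.
Proof.
move=> Ex ubx; apply/eqP; rewrite eq_le ge_sup //=; last by exists x.
by apply: ub_le_sup Ex; exists x.
Qed.

Theorem mainTheorem2 (R : realType) (n : nat) (Phi : instance R n)
  (hpos : forall k : 'I_(size Phi), 0 < (wclause k).1)
  (hsum : \sum_(wc <- Phi) wc.1 = 1)
  (d : nat) (u : 'I_n -> 'rV[R]_d)
  (hunit : forall i : 'I_n, dot (u i) (u i) = 1)
  (hgood : forall k : 'I_(size Phi), good_vectors u (wclause k).2) :
  completeness Phi = 1.
Proof.
have w_sum1 : \sum_(k < size Phi) (wclause k).1 = 1.
  by rewrite -hsum (big_tuple _ _ (in_tuple Phi)).
have [v [p [feas obj1]]] := exists_sdp_value1 hunit hgood w_sum1.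
apply: sup_eq_ub_mem; first by exists v, p.
move=> _ [v' [p' [feas' ->]]]; apply: sdp_obj_le1 feas' => // k.
exact: ltW.
Qed.
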